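(* For $\delta\in[-1,1]$ let $C_\delta(u,v)=\dfrac{uv}{1+\delta(1-u)(1-v)}$, $(u,v)\in[0,1]^2$ (Ali–Mikhail–Haq family). If $\delta\in[0,1]$, then $C_\delta$ is $I(-1,1)$ and $I(1,-1)$. If $\delta\in[-1,0]$, then $C_\delta$ is $I(1,1)$ and $I(-1,-1)$.
   Context: For $\alpha\in\{-1,1\}^2$ and a random pair $\mathbf X$, write $\alpha\mathbf X=(\alpha_1X_1,\alpha_2X_2)$; inequalities between vectors are componentwise. $\mathbf X$ is $I(\alpha)$ if for every $\mathbf x\in\mathbb R^2$, $\mathbb P[\alpha\mathbf X>\mathbf x\mid \alpha\mathbf X>\mathbf x']\le \mathbb P[\alpha\mathbf X>\mathbf x\mid \alpha\mathbf X>\mathbf x'']$ whenever $\mathbf x'\le\mathbf x''$ and $\mathbb P[\alpha\mathbf X>\mathbf x'']>0$. A copula is $I(\alpha)$ if a random vector with that distribution function is. $C_\delta$ is a 2-copula for each $\delta\in[-1,1]$. *)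

From HB Require Import structures.
From mathcomp Require Import all_boot all_order all_algebra.
From mathcomp Require Import all_classical all_reals all_analysis.
Set Implicit Arguments. Unset Strict Implicit. Unset Printing Implicit Defensive.
Import Order.TTheory GRing.Theory Num.Theory.
Local Open Scope classical_set_scope.
Local Open Scope ring_scope.

Definition AMH (R : realType) (delta u v : R) : R :=
  u * v / (1 + delta * (1 - u) * (1 - v)).

Definition clamp01 (R : realType) (x : R) : R := Num.min 1 (Num.max 0 x).

(* (X1,X2) has the distribution function H(x,y) = C(clamp x, clamp y),
   i.e. the joint df induced by the copula C (uniform margins on [0,1]). *)
Definition has_copula_df (R : realType) (d : measure_display)
  (T : measurableType d) (P : probability T R) (X1 X2 : T -> R)
  (C : R -> R -> R) : Prop :=
  forall x y : R,
    P [set w | X1 w <= x /\ X2 w <= y] = (C (clamp01 x) (clamp01 y))%:E.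

Definition upper_event (R : realType) (T : Type) (a1 a2 : R) (X1 X2 : T -> R)
  (x1 x2 : R) : set T :=
  [set w | x1 < a1 * X1 w /\ x2 < a2 * X2 w].

Definition condprob (R : realType) (d : measure_display)
  (T : measurableType d) (P : probability T R) (A B : set T) : R :=
  fine (P (A `&` B)) / fine (P B).

Definition vec_I (R : realType) (d : measure_display)
  (T : measurableType d) (P : probability T R) (a1 a2 : R)
  (X1 X2 : T -> R) : Prop :=
  forall x1 x2 x1' x2' x1'' x2'' : R,
    x1' <= x1'' -> x2' <= x2'' ->
    (0 < P (upper_event a1 a2 X1 X2 x1'' x2''))%E ->
    condprob P (upper_event a1 a2 X1 X2 x1 x2) (upper_event a1 a2 X1 X2 x1' x2')
    <= condprob P (upper_event a1 a2 X1 X2 x1 x2) (upper_event a1 a2 X1 X2 x1'' x2'').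

(* the copula C is I(alpha): a random vector with distribution function C is
   I(alpha) (the property depends only on the distribution, so we quantify
   over all such random vectors). *)
Definition copula_I (R : realType) (a1 a2 : R) (C : R -> R -> R) : Prop :=
  forall (d : measure_display) (T : measurableType d) (P : probability T R)
    (X1 X2 : T -> R),
    measurable_fun setT X1 -> measurable_fun setT X2 ->
    has_copula_df P X1 X2 C ->
    vec_I P a1 a2 X1 X2.

From HB Require Import structures.
From mathcomp Require Import all_boot all_order all_algebra.
From mathcomp Require Import all_classical all_reals all_analysis.
From mathcomp Require Import ring lra.
Import Order.TTheory GRing.Theory Num.Theory.
Set Implicit Arguments. Unset Strict Implicit. Unset Printing Implicit Defensive.
Local Open Scope classical_set_scope.
Local Open Scope ring_scope.

(* Write h x = P[alpha X > x] for the survival function of alpha X.  Since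
   {alpha X > x} meets {alpha X > x'} in {alpha X > max x x'}, property I(alpha)
   says that h (max x x') / h x' is nondecreasing in x'; this follows as soon as
   h is antitone in each coordinate and TP2,
     h a b' * h a' b <= h a b * h a' b'   for a <= a' and b <= b'.
   A copula has uniform atomless margins, so h is one of C(u,v), u - C(u,v),
   v - C(u,v) or 1 - u - v + C(u,v), taken at the clamped coordinates +-x_i.
   For the Ali-Mikhail-Haq copula each of these is a product of one-variable
   factors with 1/D or E/D, where D(u,v) = 1 + delta(1-u)(1-v) and
   E(u,v) = 1 + delta(1-u-v).  After clearing denominators, the TP2 defect of
   C and of u - C is a nonnegative multiple of
     D(u,v')D(u',v) - D(u,v)D(u',v') = delta(u'-u)(v-v'),
   and that of 1 - u - v + C is one of -delta(u'-u)(v'-v)(E E' + delta D D');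
   either way its sign is fixed by the sign of delta. *)

Section CrossRatio.
Variable R : realFieldType.

Lemma ler_cross_frac (N1 N2 N3 N4 D1 D2 D3 D4 : R) :
  0 < D1 -> 0 < D2 -> 0 < D3 -> 0 < D4 ->
  N2 * N3 * (D1 * D4) <= N1 * N4 * (D2 * D3) ->
  N2 / D2 * (N3 / D3) <= N1 / D1 * (N4 / D4).
Proof.
move=> D1_gt0 D2_gt0 D3_gt0 D4_gt0 cleared.
by rewrite !mulf_div ler_pdivrMr ?mulr_gt0 // mulrAC ler_pdivlMr ?mulr_gt0.
Qed.

Definition tp2 (h : R -> R -> R) :=
  forall a a' b b', a <= a' -> b <= b' -> h a b' * h a' b <= h a b * h a' b'.

Lemma tp2_swap (h : R -> R -> R) : tp2 h -> tp2 (fun a b => h b a).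
Proof. by move=> h_tp2 a a' b b' le_aa' le_bb'; rewrite mulrC h_tp2. Qed.

Lemma tp2_max_shift (h : R -> R -> R) :
  (forall a b, 0 <= h a b) -> (forall a a' b, a <= a' -> h a' b <= h a b) ->
  tp2 h -> forall x s s' b m, s <= s' -> b <= m ->
  h (Num.max x s) m * h s' b <= h (Num.max x s') m * h s b.
Proof.
move=> h_ge0 h_anti h_tp2 x s s' b m le_ss' le_bm.
have [le_xs|lt_sx] := leP x s.
  rewrite [Num.max x s']max_r ?(le_trans le_xs) // [X in _ <= X]mulrC.
  exact: h_tp2.
have [le_xs'|lt_s'x] := leP x s'.
  apply: le_trans (h_tp2 _ _ _ _ le_xs' le_bm) _.
  by rewrite [X in _ <= X]mulrC ler_wpM2r // h_anti // ltW.
by rewrite ler_wpM2l // h_anti.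
Qed.

Lemma le_ratio_max_tp2 (h : R -> R -> R) :
  (forall a b, 0 <= h a b) ->
  (forall a a' b, a <= a' -> h a' b <= h a b) ->
  (forall a b b', b <= b' -> h a b' <= h a b) ->
  tp2 h -> forall x1 x2 a b a' b', a <= a' -> b <= b' -> 0 < h a' b' ->
  h (Num.max x1 a) (Num.max x2 b) / h a b
  <= h (Num.max x1 a') (Num.max x2 b') / h a' b'.
Proof.
move=> h_ge0 h_anti1 h_anti2 h_tp2 x1 x2 a b a' b' le_aa' le_bb' h_gt0.
have hb_gt0 : 0 < h a' b by apply: lt_le_trans h_gt0 (h_anti2 _ _ _ le_bb').
have hab_gt0 : 0 < h a b by apply: lt_le_trans hb_gt0 (h_anti1 _ _ _ le_aa').
have le_x2b' : b' <= Num.max x2 b' by rewrite le_max lexx orbT.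
have le_x1a' : a' <= Num.max x1 a' by rewrite le_max lexx orbT.
apply: (@le_trans _ _ (h (Num.max x1 a') (Num.max x2 b) / h a' b)).
  rewrite ler_pdivrMr // mulrAC ler_pdivlMr //.
  by apply: tp2_max_shift; rewrite ?le_max ?lexx ?orbT.
rewrite ler_pdivrMr // mulrAC ler_pdivlMr //.
have := tp2_max_shift (fun a b => h_ge0 b a) (fun a a' b => h_anti2 b a a')
  (tp2_swap h_tp2) x2 le_bb' le_x1a'.
by rewrite [X in X <= _]mulrC [X in _ <= X]mulrC.
Qed.

End CrossRatio.

Definition AMH_den (R : realType) (delta u v : R) : R :=
  1 + delta * (1 - u) * (1 - v).

Section AMHAlgebra.
Variables (R : realType) (dl : R).
Local Notation C := (AMH dl).
Local Notation D := (AMH_den dl).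

Lemma AMHE u v : C u v = u * v / D u v.
Proof. by []. Qed.

Lemma AMHC u v : C u v = C v u.
Proof. by rewrite /AMH [v * u]mulrC; congr (_ * _^-1); ring. Qed.

Lemma AMH0v v : C 0 v = 0.
Proof. by rewrite /AMH !mul0r. Qed.

Lemma AMHu1 u : C u 1 = u.
Proof. by rewrite /AMH subrr !mulr0 addr0 divr1 mulr1. Qed.

Lemma AMH1v v : C 1 v = v.
Proof. by rewrite AMHC AMHu1. Qed.

Lemma AMH_den_cross u u' v v' :
  D u v' * D u' v - D u v * D u' v' = dl * (u' - u) * (v - v').
Proof. by rewrite /AMH_den; ring. Qed.

Lemma AMH_den_gt0 u v : -1 <= dl -> 0 <= u <= 1 -> 0 <= v <= 1 ->
  0 < u + v -> 0 < D u v.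
Proof.
move=> dl_ge /andP[u_ge0 u_le1] /andP[v_ge0 v_le1] uv_gt0; rewrite /AMH_den.
have : 0 <= (1 - u) * (1 - v) by apply: mulr_ge0; lra.
have : (1 - u) * (1 - v) < 1 by nra.
nra.
Qed.

Lemma AMH_den_gt0_nneg u v : 0 <= dl -> 0 <= u <= 1 -> 0 <= v <= 1 ->
  0 < D u v.
Proof.
move=> dl_ge0 /andP[u_ge0 u_le1] /andP[v_ge0 v_le1]; rewrite /AMH_den.
have : 0 <= (1 - u) * (1 - v) by apply: mulr_ge0; lra.
nra.
Qed.

Lemma AMH_den_ge0 u v : -1 <= dl -> 0 <= u <= 1 -> 0 <= v <= 1 -> 0 <= D u v.
Proof.
move=> dl_ge /andP[u_ge0 u_le1] /andP[v_ge0 v_le1]; rewrite /AMH_den.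
have : 0 <= (1 - u) * (1 - v) by apply: mulr_ge0; lra.
have : (1 - u) * (1 - v) <= 1 by nra.
nra.
Qed.

Lemma AMH_den_le u v : dl <= 0 -> 0 <= u -> 0 <= v ->
  D u v <= 1 + dl * (1 - u - v).
Proof.
move=> dl_le0 u_ge0 v_ge0; rewrite -subr_ge0.
have -> : 1 + dl * (1 - u - v) - D u v = - dl * (u * v) by rewrite /AMH_den; ring.
by rewrite mulr_ge0 ?oppr_ge0 ?mulr_ge0.
Qed.

Lemma AMH_compl u v : 0 < D u v ->
  u - C u v = u * (1 - v) * (1 + dl * (1 - u)) / D u v.
Proof.
move=> D_gt0; apply: (mulIf (lt0r_neq0 D_gt0)).
by rewrite divfK ?lt0r_neq0 // mulrBl divfK ?lt0r_neq0 // /AMH_den; ring.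
Qed.

Lemma AMH_survival u v : 0 < D u v ->
  1 - u - v + C u v = (1 - u) * (1 - v) * (1 + dl * (1 - u - v)) / D u v.
Proof.
move=> D_gt0; apply: (mulIf (lt0r_neq0 D_gt0)).
by rewrite divfK ?lt0r_neq0 // mulrDl divfK ?lt0r_neq0 // /AMH_den; ring.
Qed.

Lemma AMH_ge_mul u v : -1 <= dl <= 0 -> 0 <= u <= 1 -> 0 <= v <= 1 ->
  u * v <= C u v.
Proof.
move=> /andP[dl_ge dl_le0] u01 v01.
have [-> | u_neq0] := eqVneq u 0; first by rewrite mul0r AMH0v.
have u_gt0 : 0 < u by rewrite lt0r u_neq0; case/andP: u01.
have D_gt0 : 0 < D u v by apply: AMH_den_gt0 => //; case/andP: v01 => *; lra.
have D_le1 : D u v <= 1.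
  case/andP: u01 => *; case/andP: v01 => *; rewrite /AMH_den.
  have : 0 <= (1 - u) * (1 - v) by apply: mulr_ge0; lra.
  nra.
rewrite AMHE ler_pdivlMr // ler_piMr //.
by apply: mulr_ge0; [case/andP: u01 | case/andP: v01].
Qed.

End AMHAlgebra.

Section AMHTotalPositivity.
Variables (R : realType) (dl : R).
Local Notation C := (AMH dl).
Local Notation D := (AMH_den dl).

Lemma AMH_tp2 u u' v v' : -1 <= dl <= 0 ->
  0 <= u <= 1 -> 0 <= v <= 1 -> 0 <= u' <= 1 -> 0 <= v' <= 1 ->
  u' <= u -> v' <= v -> C u v' * C u' v <= C u v * C u' v'.
Proof.
move=> /andP[dl_ge dl_le0] u01 v01 u'01 v'01 le_u'u le_v'v.
have [->|u'_neq0] := eqVneq u' 0; first by rewrite !AMH0v !mulr0.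
have [->|v'_neq0] := eqVneq v' 0.
  by rewrite ![C _ 0]AMHC !AMH0v mul0r mulr0.
have [[u_ge0 _] [v_ge0 _]] := (andP u01, andP v01).
have [[u'_ge0 _] [v'_ge0 _]] := (andP u'01, andP v'01).
have u'_gt0 : 0 < u' by rewrite lt0r u'_neq0.
have v'_gt0 : 0 < v' by rewrite lt0r v'_neq0.
rewrite !AMHE; apply: ler_cross_frac; try (apply: AMH_den_gt0 => //; lra).
have -> : u * v' * (u' * v) = u * v * (u' * v') by ring.
apply: ler_wpM2l; first by rewrite !mulr_ge0.
rewrite -subr_ge0 AMH_den_cross.
by rewrite mulr_ge0 ?mulr_le0 ?subr_le0 ?subr_ge0.
Qed.

Lemma AMH_compl_rr2 u u' v v' : 0 <= dl ->
  0 <= u <= 1 -> 0 <= v <= 1 -> 0 <= u' <= 1 -> 0 <= v' <= 1 ->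
  u' <= u -> v <= v' ->
  (u - C u v') * (u' - C u' v) <= (u - C u v) * (u' - C u' v').
Proof.
move=> dl_ge0 u01 v01 u'01 v'01 le_u'u le_vv'.
have D_gt0 x y : 0 <= x <= 1 -> 0 <= y <= 1 -> 0 < D x y.
  exact: AMH_den_gt0_nneg.
rewrite !AMH_compl ?D_gt0 //; apply: ler_cross_frac; rewrite ?D_gt0 //.
have [[u_ge0 u_le1] [v_ge0 v_le1]] := (andP u01, andP v01).
have [[u'_ge0 u'_le1] [v'_ge0 v'_le1]] := (andP u'01, andP v'01).
set K := u * (1 - v) * (1 + dl * (1 - u)) * (u' * (1 - v') * (1 + dl * (1 - u'))).
have K_ge0 : 0 <= K.
  by rewrite /K !mulr_ge0 ?subr_ge0 ?addr_ge0 ?mulr_ge0 ?subr_ge0.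
have -> : u * (1 - v') * (1 + dl * (1 - u)) * (u' * (1 - v) * (1 + dl * (1 - u')))
  = K by rewrite /K; ring.
apply: ler_wpM2l => //; rewrite -subr_ge0 AMH_den_cross.
by rewrite mulr_le0 ?mulr_ge0_le0 ?subr_le0.
Qed.

Lemma AMH_survival_tp2 u u' v v' : -1 <= dl <= 0 ->
  0 <= u <= 1 -> 0 <= v <= 1 -> 0 <= u' <= 1 -> 0 <= v' <= 1 ->
  u <= u' -> v <= v' ->
  (1 - u - v' + C u v') * (1 - u' - v + C u' v)
  <= (1 - u - v + C u v) * (1 - u' - v' + C u' v').
Proof.
move=> dl_bnd u01 v01 u'01 v'01 le_uu' le_vv'.
have [dl_ge dl_le0] := andP dl_bnd.
have [[u_ge0 u_le1] [v_ge0 v_le1]] := (andP u01, andP v01).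
have [[u'_ge0 u'_le1] [v'_ge0 v'_le1]] := (andP u'01, andP v'01).
(* For [dl = -1] the denominator [D 0 0] vanishes, so this corner is treated
   directly. *)
have [/andP[/eqP u0 /eqP v0] | uv_neq0] := boolP ((u == 0) && (v == 0)).
  rewrite u0 v0 ![C _ 0]AMHC !AMH0v.
  have := AMH_ge_mul dl_bnd u'01 v'01; nra.
have uv_gt0 : 0 < u + v.
  by rewrite lt_neqAle addr_ge0 // andbT eq_sym paddr_eq0 // negb_and.
have [D1 D2 D3 D4] : [/\ 0 < D u v, 0 < D u v', 0 < D u' v & 0 < D u' v'].
  by split; apply: AMH_den_gt0 => //; lra.
pose E x y := 1 + dl * (1 - x - y).
rewrite !AMH_survival //; apply: ler_cross_frac => //.
set K := (1 - u) * (1 - v) * ((1 - u') * (1 - v')).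
have K_ge0 : 0 <= K by rewrite /K !mulr_ge0 ?subr_ge0.
have -> : (1 - u) * (1 - v') * E u v' * ((1 - u') * (1 - v) * E u' v)
  = K * (E u v' * E u' v) by rewrite /K /E; ring.
have -> : (1 - u) * (1 - v) * E u v * ((1 - u') * (1 - v') * E u' v')
  = K * (E u v * E u' v') by rewrite /K /E; ring.
rewrite -!(mulrA K); apply: ler_wpM2l => //; rewrite -subr_ge0.
have -> : E u v * E u' v' * (D u v' * D u' v) - E u v' * E u' v * (D u v * D u' v')
  = - dl * (u' - u) * (v' - v) * (E u v * E u' v' + dl * (D u v * D u' v')).
  by rewrite /E /AMH_den; ring.
rewrite mulr_ge0 ?mulr_ge0 ?subr_ge0 ?oppr_ge0 //.
have : D u v * D u' v' <= E u v * E u' v'.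
  by apply: ler_pM; rewrite ?AMH_den_le ?AMH_den_ge0.
have : 0 <= D u v * D u' v' by rewrite mulr_ge0 ?AMH_den_ge0.
nra.
Qed.

End AMHTotalPositivity.

Section Clamp.
Variable R : realType.
Local Notation cl := (@clamp01 R).

Lemma clamp01E x : cl x = if x < 0 then 0 else if x < 1 then x else 1.
Proof.
rewrite /clamp01; case: (ltP x 0) => x_lt0; first by rewrite min_r // ler01.
by case: (ltP x 1).
Qed.

Lemma clamp01_itv x : 0 <= cl x <= 1.
Proof. by rewrite clamp01E; case: ifP => ?; [|case: ifP => ?]; apply/andP; lra. Qed.

Lemma le_clamp01 x y : x <= y -> cl x <= cl y.
Proof.
move=> le_xy; rewrite !clamp01E.
by case: ifP => ?; case: ifP => ?; try case: ifP => ?; try case: ifP => ?; lra.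
Qed.

Lemma clamp01_sub_le x y : x <= y -> cl y - cl x <= y - x.
Proof.
move=> le_xy; rewrite !clamp01E.
by case: ifP => ?; case: ifP => ?; try case: ifP => ?; try case: ifP => ?; lra.
Qed.

Lemma clamp01_1 : cl 1 = 1.
Proof. by rewrite clamp01E ltr10 ltxx. Qed.

End Clamp.

Section RealProbability.
Variables (R : realType) (d : measure_display) (T : measurableType d).
Variable P : probability T R.
Implicit Types A B N : set T.

Definition pr A : R := fine (P A).

Lemma prE A : measurable A -> P A = (pr A)%:E.
Proof. by move=> mA; rewrite /pr fineK // fin_num_measure. Qed.

Lemma pr_ge0 A : 0 <= pr A.
Proof. by rewrite /pr fine_ge0. Qed.

Lemma pr_setT : pr setT = 1.
Proof. by rewrite /pr probability_setT. Qed.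

Lemma le_pr A B : measurable A -> measurable B -> A `<=` B -> pr A <= pr B.
Proof.
move=> mA mB AB; apply: fine_le; rewrite ?fin_num_measure //.
by apply: le_measure; rewrite ?inE.
Qed.

Lemma prDI A B : measurable A -> measurable B ->
  pr A = pr (A `\` B) + pr (A `&` B).
Proof.
move=> mA mB.
have : (P A = P (A `\` B) + P (A `&` B))%E := measureDI P mA mB.
by rewrite (prE mA) (prE (measurableD mA mB)) (prE (measurableI _ _ mA mB)) -EFinD => -[].
Qed.

Lemma pr_setCI A B : measurable A -> measurable B ->
  pr (~` A `&` ~` B) = 1 - pr A - pr B + pr (A `&` B).
Proof.
move=> mA mB.
have CA := prDI measurableT mA; rewrite setTI pr_setT setTD in CA.
have CAB := prDI (measurableC mA) mB.
rewrite (_ : ~` A `&` B = B `\` A) in CAB; last by rewrite setIC.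
have BA := prDI mB mA; rewrite setIC in BA.
rewrite -setDE; lra.
Qed.

Lemma pr_eq_null A B N : measurable A -> measurable B -> measurable N ->
  A `<=` B -> B `\` A `<=` N -> pr N = 0 -> pr A = pr B.
Proof.
move=> mA mB mN AB BAN N0.
rewrite (prDI mB mA) (setIidr AB).
have : pr (B `\` A) <= 0 by rewrite -N0; apply: le_pr => //; exact: measurableD.
have := pr_ge0 (B `\` A); lra.
Qed.

End RealProbability.

Section LevelSets.
Variables (R : realType) (d : measure_display) (T : measurableType d).
Variables (f : T -> R) (mf : measurable_fun setT f).

Lemma measurable_sublevel c : measurable [set w | f w <= c].
Proof.
by rewrite -preimage_itvNyc -[_ @^-1` _]setTI; apply: mf => //; exact: measurable_itv.
Qed.

Lemma measurable_strict_sublevel c : measurable [set w | f w < c].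
Proof.
by rewrite -preimage_itvNyo -[_ @^-1` _]setTI; apply: mf => //; exact: measurable_itv.
Qed.

Lemma measurable_strict_superlevel c : measurable [set w | c < f w].
Proof.
by rewrite -preimage_itvoy -[_ @^-1` _]setTI; apply: mf => //; exact: measurable_itv.
Qed.

Lemma setC_sublevel c : ~` [set w | f w <= c] = [set w | c < f w].
Proof.
by apply/seteqP; split => w /=; [move/negP; rewrite -ltNge | rewrite ltNge => /negP].
Qed.

Lemma setD_sublevel_strict c : [set w | f w <= c] `\` [set w | f w < c] = [set w | f w = c].
Proof.
apply/seteqP; split => w /=; last by move=> ->; rewrite lexx ltxx.
by move=> [le_c /negP]; rewrite -leNgt => ge_c; apply/eqP; rewrite eq_le le_c.
Qed.

End LevelSets.

Section CopulaFirstMargin.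
Variables (R : realType) (d : measure_display) (T : measurableType d).
Variables (P : probability T R) (C : R -> R -> R) (X1 X2 : T -> R).
Hypotheses (mX1 : measurable_fun setT X1) (mX2 : measurable_fun setT X2).
Hypothesis C_u1 : forall u, C u 1 = u.
Hypothesis dfX : has_copula_df P X1 X2 C.
Local Notation cl := (@clamp01 R).

Lemma pr_joint_cdf x y :
  pr P ([set w | X1 w <= x] `&` [set w | X2 w <= y]) = C (cl x) (cl y).
Proof. by rewrite /pr (dfX x y). Qed.

Lemma pr_snd_le1 : pr P [set w | X2 w <= 1] = 1.
Proof.
have mB := measurable_sublevel mX2 1.
apply/le_anti/andP; split.
  by rewrite -[X in _ <= X](pr_setT P); apply: le_pr.
have C11 : C (cl 1) (cl 1) = 1 by rewrite clamp01_1 C_u1.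
rewrite -[X in X <= _]C11 -pr_joint_cdf; apply: le_pr => //.
exact: measurableI (measurable_sublevel mX1 1) mB.
Qed.

Lemma pr_fst_cdf a : pr P [set w | X1 w <= a] = cl a.
Proof.
have mA := measurable_sublevel mX1 a; have mB := measurable_sublevel mX2 1.
rewrite (prDI P mA mB) pr_joint_cdf clamp01_1 C_u1.
suff : pr P ([set w | X1 w <= a] `\` [set w | X2 w <= 1]) <= 0.
  by have := pr_ge0 P ([set w | X1 w <= a] `\` [set w | X2 w <= 1]); lra.
have := prDI P measurableT mB; rewrite setTI pr_setT pr_snd_le1.
have : pr P ([set w | X1 w <= a] `\` [set w | X2 w <= 1])
  <= pr P (setT `\` [set w | X2 w <= 1]).
  by apply: le_pr; [exact: measurableD | exact: measurableD | move=> w []].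
lra.
Qed.

Lemma pr_fst_eq a : pr P [set w | X1 w = a] = 0.
Proof.
(* [clamp01] is 1-Lipschitz, so [X1 = a] has probability at most any [e > 0]. *)
apply/le_anti; rewrite pr_ge0 andbT.
rewrite leNgt; apply/negP => pr_gt0.
set e := pr P [set w | X1 w = a] / 2.
have e_gt0 : 0 < e by rewrite divr_gt0.
have mAe := measurable_sublevel mX1 (a - e).
have := prDI P (measurable_sublevel mX1 a) mAe.
rewrite setIidr; last by move=> w /=; lra.
rewrite !pr_fst_cdf.
have := @clamp01_sub_le R (a - e) a ltac:(lra).
have : pr P [set w | X1 w = a]
  <= pr P ([set w | X1 w <= a] `\` [set w | X1 w <= a - e]).
  apply: le_pr; last by move=> w /= ->; split => //; apply/negP; rewrite -ltNge; lra.
    rewrite -setD_sublevel_strict.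
    exact: measurableD (measurable_sublevel mX1 a) (measurable_strict_sublevel mX1 a).
  exact: measurableD (measurable_sublevel mX1 a) mAe.
rewrite /e; lra.
Qed.

Lemma pr_fst_ltI a E : measurable E ->
  pr P ([set w | X1 w < a] `&` E) = pr P ([set w | X1 w <= a] `&` E).
Proof.
move=> mE; apply: (pr_eq_null (N := [set w | X1 w = a])).
- exact: measurableI (measurable_strict_sublevel mX1 a) mE.
- exact: measurableI (measurable_sublevel mX1 a) mE.
- rewrite -setD_sublevel_strict.
  exact: measurableD (measurable_sublevel mX1 a) (measurable_strict_sublevel mX1 a).
- by move=> w [/ltW].
- move=> w [[le_a Ew] /not_andP[] // /negP]; rewrite -leNgt => ge_a.
  by apply/eqP; rewrite eq_le le_a.
- exact: pr_fst_eq.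
Qed.

Lemma pr_upper_event_Np x1 x2 :
  pr P (upper_event (-1) 1 X1 X2 x1 x2) = cl (- x1) - C (cl (- x1)) (cl x2).
Proof.
have -> : upper_event (-1) 1 X1 X2 x1 x2
  = [set w | X1 w < - x1] `&` ~` [set w | X2 w <= x2].
  rewrite setC_sublevel /upper_event; apply/seteqP.
  by split=> w /=; rewrite mulN1r mul1r ltrNr.
have mB := measurable_sublevel mX2 x2.
rewrite pr_fst_ltI; last exact: measurableC.
have := prDI P (measurable_sublevel mX1 (- x1)) mB.
rewrite pr_fst_cdf pr_joint_cdf -setDE; lra.
Qed.

End CopulaFirstMargin.

Lemma has_copula_df_swap (R : realType) (d : measure_display) (T : measurableType d)
    (P : probability T R) (C : R -> R -> R) (X1 X2 : T -> R) :
  has_copula_df P X1 X2 C -> has_copula_df P X2 X1 (fun u v => C v u).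
Proof.
move=> dfX x y; rewrite -dfX; congr (P _).
by apply/seteqP; split=> w [? ?]; split.
Qed.

Lemma upper_event_swap (R : realType) (T : Type) (a1 a2 : R) (X1 X2 : T -> R) x1 x2 :
  upper_event a1 a2 X1 X2 x1 x2 = upper_event a2 a1 X2 X1 x2 x1.
Proof. by apply/seteqP; split=> w [? ?]; split. Qed.

Section CopulaUpperEvents.
Variables (R : realType) (d : measure_display) (T : measurableType d).
Variables (P : probability T R) (C : R -> R -> R) (X1 X2 : T -> R).
Hypotheses (mX1 : measurable_fun setT X1) (mX2 : measurable_fun setT X2).
Hypotheses (C_u1 : forall u, C u 1 = u) (C_1v : forall v, C 1 v = v).
Hypothesis dfX : has_copula_df P X1 X2 C.
Local Notation cl := (@clamp01 R).
Let dfX_swap := has_copula_df_swap dfX.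

Lemma pr_upper_event_pN x1 x2 :
  pr P (upper_event 1 (-1) X1 X2 x1 x2) = cl (- x2) - C (cl x1) (cl (- x2)).
Proof. by rewrite upper_event_swap (pr_upper_event_Np mX2 mX1 C_1v dfX_swap). Qed.

Lemma pr_upper_event_NN x1 x2 :
  pr P (upper_event (-1) (-1) X1 X2 x1 x2) = C (cl (- x1)) (cl (- x2)).
Proof.
have -> : upper_event (-1) (-1) X1 X2 x1 x2
  = [set w | X1 w < - x1] `&` [set w | X2 w < - x2].
  rewrite /upper_event; apply/seteqP.
  by split=> w /=; rewrite !mulN1r [x1 < _]ltrNr [x2 < _]ltrNr.
rewrite (pr_fst_ltI mX1 mX2 C_u1 dfX _ (measurable_strict_sublevel mX2 _)) setIC.
rewrite (pr_fst_ltI mX2 mX1 C_1v dfX_swap _ (measurable_sublevel mX1 _)) setIC.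
exact: (pr_joint_cdf dfX).
Qed.

Lemma pr_upper_event_pp x1 x2 :
  pr P (upper_event 1 1 X1 X2 x1 x2) = 1 - cl x1 - cl x2 + C (cl x1) (cl x2).
Proof.
have -> : upper_event 1 1 X1 X2 x1 x2
  = ~` [set w | X1 w <= x1] `&` ~` [set w | X2 w <= x2].
  rewrite !setC_sublevel /upper_event; apply/seteqP.
  by split=> w /=; rewrite !mul1r.
rewrite pr_setCI; try exact: measurable_sublevel.
rewrite (pr_fst_cdf mX1 mX2 C_u1 dfX) (pr_fst_cdf mX2 mX1 C_1v dfX_swap).
by rewrite (pr_joint_cdf dfX).
Qed.

End CopulaUpperEvents.

Section UpperEvents.
Variables (R : realType) (d : measure_display) (T : measurableType d).
Variables (a1 a2 : R) (X1 X2 : T -> R).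
Hypotheses (mX1 : measurable_fun setT X1) (mX2 : measurable_fun setT X2).

Lemma upper_eventI x1 x2 y1 y2 :
  upper_event a1 a2 X1 X2 x1 x2 `&` upper_event a1 a2 X1 X2 y1 y2 =
  upper_event a1 a2 X1 X2 (Num.max x1 y1) (Num.max x2 y2).
Proof.
rewrite /upper_event; apply/seteqP; split => w /=; rewrite !gt_max.
  by move=> [[-> ->] [-> ->]].
by move=> [/andP[-> ->] /andP[-> ->]].
Qed.

Lemma measurable_upper_event x1 x2 : measurable (upper_event a1 a2 X1 X2 x1 x2).
Proof.
apply: measurableI; apply: measurable_strict_superlevel.
  exact: measurable_realfun.measurable_funM (measurable_cst a1) mX1.
exact: measurable_realfun.measurable_funM (measurable_cst a2) mX2.
Qed.

Lemma vec_I_of_tp2 (P : probability T R) :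
  tp2 (fun x1 x2 => pr P (upper_event a1 a2 X1 X2 x1 x2)) ->
  vec_I P a1 a2 X1 X2.
Proof.
move=> h_tp2 x1 x2 a b a' b' le_aa' le_bb' P_gt0.
rewrite /condprob !upper_eventI.
apply: (le_ratio_max_tp2 (h := fun x y => pr P (upper_event a1 a2 X1 X2 x y))) => //.
- by move=> *; exact: pr_ge0.
- move=> x x' y le_xx'; apply: le_pr; try exact: measurable_upper_event.
  by move=> w [lt_x' lt_y]; split => //; exact: le_lt_trans lt_x'.
- move=> x y y' le_yy'; apply: le_pr; try exact: measurable_upper_event.
  by move=> w [lt_x lt_y']; split => //; exact: le_lt_trans lt_y'.
- apply: fine_gt0; rewrite P_gt0 /= ltey_eq fin_num_measure //.
  exact: measurable_upper_event.
Qed.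

End UpperEvents.

Section AMHCopulaI.
Variables (R : realType) (dl : R).
Local Notation cl := (@clamp01 R).

Lemma AMH_copula_I_NN : -1 <= dl <= 0 -> copula_I (-1) (-1) (AMH dl).
Proof.
move=> dl_bnd d T P X1 X2 mX1 mX2 dfX; apply: vec_I_of_tp2 => // a a' b b' le_aa' le_bb'.
rewrite !(pr_upper_event_NN mX1 mX2 (@AMHu1 _ dl) (@AMH1v _ dl) dfX).
by apply: AMH_tp2; rewrite ?clamp01_itv // le_clamp01 // lerN2.
Qed.

Lemma AMH_copula_I_pp : -1 <= dl <= 0 -> copula_I 1 1 (AMH dl).
Proof.
move=> dl_bnd d T P X1 X2 mX1 mX2 dfX; apply: vec_I_of_tp2 => // a a' b b' le_aa' le_bb'.
rewrite !(pr_upper_event_pp mX1 mX2 (@AMHu1 _ dl) (@AMH1v _ dl) dfX).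
by apply: AMH_survival_tp2; rewrite ?clamp01_itv // le_clamp01.
Qed.

Lemma AMH_copula_I_Np : 0 <= dl -> copula_I (-1) 1 (AMH dl).
Proof.
move=> dl_ge0 d T P X1 X2 mX1 mX2 dfX; apply: vec_I_of_tp2 => // a a' b b' le_aa' le_bb'.
rewrite !(pr_upper_event_Np mX1 mX2 (@AMHu1 _ dl) dfX).
by apply: AMH_compl_rr2; rewrite ?clamp01_itv // le_clamp01 // lerN2.
Qed.

Lemma AMH_copula_I_pN : 0 <= dl -> copula_I 1 (-1) (AMH dl).
Proof.
move=> dl_ge0 d T P X1 X2 mX1 mX2 dfX; apply: vec_I_of_tp2 => // a a' b b' le_aa' le_bb'.
rewrite !(pr_upper_event_pN mX1 mX2 (@AMH1v _ dl) dfX).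
rewrite ![AMH dl (cl _) (cl (- _))]AMHC mulrC.
by apply: AMH_compl_rr2; rewrite ?clamp01_itv // le_clamp01 // lerN2.
Qed.

End AMHCopulaI.

Theorem mainTheorem5 (R : realType) (delta : R) :
  (0 <= delta <= 1 ->
     copula_I (-1) 1 (AMH delta) /\ copula_I 1 (-1) (AMH delta)) /\
  (-1 <= delta <= 0 ->
     copula_I 1 1 (AMH delta) /\ copula_I (-1) (-1) (AMH delta)).
Proof.
split=> /andP[delta_lo delta_hi].
  by split; [apply: AMH_copula_I_Np | apply: AMH_copula_I_pN].
by split; [apply: AMH_copula_I_pp | apply: AMH_copula_I_NN]; apply/andP.
Qed.
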